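(* Let $c:\mathbb{R}^{n_x}\to\mathbb{R}^m$ be a smooth function with $c(x)=(c_1(x),\dots,c_m(x))$ such that $\nabla c(x)\in\mathbb{R}^{n_x\times m}$ has rank $m$. Let $S\in\mathbb{R}^{2^m\times m}$ be a matrix whose rows are pairwise distinct and whose entries all lie in $\{-1,1\}$ (so its rows are exactly the $2^m$ sign vectors), and denote by $S_{i,\bullet}$ its $i$-th row. For $i\in\{1,\dots,2^m\}$ define $$R'_i=\{x\in\mathbb{R}^{n_x}\mid \mathrm{diag}(S_{i,\bullet})\,c(x)>0\}$$ (componentwise inequality), and define $g:\mathbb{R}^{n_x}\to\mathbb{R}^{2^m}$ by $g(x)=-S\,c(x)$, with components $g_i(x)$. Let $$R_i=\{x\in\mathbb{R}^{n_x}\mid g_i(x)<\min_{j\neq i} g_j(x)\}.$$ Then for every $i$ and every $x\in R'_i$ the following hold: (i) $g_i(x)<g_j(x)$ for all $j\neq i$; (ii) the two definitions describe the same set, i.e., $R_i=R'_i$.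
   Context: $\mathrm{diag}(v)$ denotes the diagonal matrix with the entries of the vector $v$ on its diagonal. *)

From HB Require Import structures.
From mathcomp Require Import all_boot all_order all_algebra.
From mathcomp Require Import all_classical all_reals all_analysis.
Set Implicit Arguments. Unset Strict Implicit. Unset Printing Implicit Defensive.
Import Order.TTheory GRing.Theory Num.Theory.
Import numFieldNormedType.Exports.
Local Open Scope ring_scope.
Local Open Scope classical_set_scope.

Definition basis_vec (R : realType) (n : nat) (i : 'I_n) : 'rV[R]_n :=
  delta_mx 0 i.

Definition iter_partial (R : realType) (n : nat) (s : seq 'I_n)
  (f : 'rV[R]_n -> R) : 'rV[R]_n -> R :=
  foldr (fun i g => fun x => 'D_(basis_vec R i) g x) f s.

Definition smooth_fun (R : realType) (n : nat) (f : 'rV[R]_n -> R) : Prop :=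
  forall (s : seq 'I_n) (x : 'rV[R]_n), differentiable (iter_partial s f) x.

Definition comp_fun (R : realType) (nx m : nat) (c : 'rV[R]_nx -> 'cV[R]_m)
  (j : 'I_m) : 'rV[R]_nx -> R := fun x => c x j 0.

Definition grad_mx (R : realType) (nx m : nat) (c : 'rV[R]_nx -> 'cV[R]_m)
  (x : 'rV[R]_nx) : 'M[R]_(nx, m) :=
  \matrix_(i < nx, j < m) 'D_(basis_vec R i) (comp_fun c j) x.

Definition gfun (R : realType) (nx m : nat) (S : 'M[R]_(2 ^ m, m))
  (c : 'rV[R]_nx -> 'cV[R]_m) (x : 'rV[R]_nx) : 'cV[R]_(2 ^ m) :=
  - (S *m c x).

Definition Rprime (R : realType) (nx m : nat) (S : 'M[R]_(2 ^ m, m))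
  (c : 'rV[R]_nx -> 'cV[R]_m) (i : 'I_(2 ^ m)) : set 'rV[R]_nx :=
  [set x | forall k : 'I_m, 0 < (diag_mx (row i S) *m c x) k 0].

(* min_{j <> i} g_j(x), in the extended reals (= +oo if there is no j <> i) *)
Definition min_other (R : realType) (N : nat) (v : 'cV[R]_N) (i : 'I_N)
  : \bar R :=
  \big[Order.min/+oo%E]_(j < N | j != i) ((v j 0)%:E).

Definition Rset (R : realType) (nx m : nat) (S : 'M[R]_(2 ^ m, m))
  (c : 'rV[R]_nx -> 'cV[R]_m) (i : 'I_(2 ^ m)) : set 'rV[R]_nx :=
  [set x | ((gfun S c x i 0)%:E < min_other (gfun S c x) i)%E].

From HB Require Import structures.
From mathcomp Require Import all_boot all_order all_algebra.
From mathcomp Require Import all_classical all_reals all_analysis.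
Set Implicit Arguments.
Unset Strict Implicit.
Unset Printing Implicit Defensive.
Import Order.TTheory GRing.Theory Num.Theory.
Import numFieldNormedType.Exports.
Local Open Scope ring_scope.
Local Open Scope classical_set_scope.

(* For sign vectors s_i, s_j one has
   g_j(x) - g_i(x) = 2 * sum_{k : s_ik <> s_jk} s_ik c_k(x).
   On R'_i every s_ik c_k(x) is positive, so g_i is the strict minimum.
   Conversely, since the 2^m distinct rows of S are all the sign vectors,
   the row obtained from s_i by flipping its k-th entry is some s_j, for which
   g_j(x) - g_i(x) = 2 s_ik c_k(x); minimality of g_i forces this to be
   positive for every k, i.e. x lies in R'_i. *)

Definition is_sign (R : numDomainType) (a : R) : Prop := a = 1 \/ a = -1.

Section Signs.
Variable R : numDomainType.
Implicit Types a b y : R.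

Lemma is_sign_neq0 a : is_sign a -> a != 0.
Proof. by case=> ->; rewrite ?oppr_eq0 oner_eq0. Qed.

Lemma is_sign_eq a b : is_sign a -> is_sign b -> (a == 1) = (b == 1) -> a = b.
Proof.
have Nm11 : ((-1 : R) == 1) = false by rewrite eqNr oner_eq0.
by case=> ->; case=> ->; rewrite ?eqxx ?Nm11.
Qed.

Lemma is_signN a : is_sign a -> is_sign (- a).
Proof. by case=> ->; rewrite ?opprK; [right | left]. Qed.

Lemma is_sign_eqN a b : is_sign a -> is_sign b -> a != b -> b = - a.
Proof. by case=> ->; case=> ->; rewrite ?eqxx ?opprK. Qed.

Lemma sign_subr_mul a b y : is_sign a -> is_sign b ->
  (a - b) * y = if a == b then 0 else (a * y) *+ 2.
Proof.
move=> sa sb; have [->|neq_ab] := eqVneq a b; first by rewrite subrr mul0r.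
by rewrite (is_sign_eqN sa sb neq_ab) opprK -mulr2n mulrnAl.
Qed.

End Signs.

Lemma sign_rows_cover (R : numDomainType) (m : nat) (S : 'M[R]_(2 ^ m, m)) :
  (forall i k, is_sign (S i k)) -> (forall i j, row i S = row j S -> i = j) ->
  forall v : 'I_m -> R, (forall k, is_sign (v k)) ->
  exists j, forall k, S j k = v k.
Proof.
move=> S_sign S_inj v v_sign.
pose code j : {ffun 'I_m -> bool} := [ffun k => S j k == 1].
have code_inj : injective code.
  move=> j1 j2 /ffunP eq_code; apply: S_inj; apply/rowP => k; rewrite !mxE.
  by apply: is_sign_eq; rewrite // -!(ffunE (fun k => S _ k == 1)) eq_code.
have [decode _ codeK] : bijective code.
  by apply: (inj_card_bij code_inj); rewrite card_ffun !card_ord card_bool.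
exists (decode [ffun k => v k == 1]) => k.
apply: is_sign_eq => //.
by rewrite -(ffunE (fun k => S _ k == 1)) -/(code _) codeK ffunE.
Qed.

Lemma lte_min_other (R : realType) (N : nat) (v : 'cV[R]_N) (i : 'I_N) (a : R) :
  (a%:E < min_other v i)%E <-> forall j, j != i -> a < v j 0.
Proof.
split=> [a_lt j ji | a_lt].
  rewrite -lte_fin; apply: lt_le_trans a_lt _.
  by rewrite /min_other (bigD1 j) //= ge_min lexx.
apply: (big_ind (fun e => a%:E < e)%E) => [|e1 e2|j ji]; first exact: ltry.
  by rewrite lt_min => -> ->.
by rewrite lte_fin; apply: a_lt.
Qed.

Section Regions.
Variables (R : realType) (nx m : nat).
Variables (S : 'M[R]_(2 ^ m, m)) (c : 'rV[R]_nx -> 'cV[R]_m).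
Hypothesis S_sign : forall i k, is_sign (S i k).

Lemma gfun_subE x i j :
  gfun S c x j 0 - gfun S c x i 0 =
  \sum_(k | S i k != S j k) (S i k * c x k 0) *+ 2.
Proof.
rewrite /gfun !mxE opprK addrC -sumrB [RHS]big_mkcond /=.
apply: eq_bigr => k _; rewrite -mulrBl sign_subr_mul //.
by case: eqP.
Qed.

Lemma RprimeE i x : Rprime S c i x <-> forall k, 0 < S i k * c x k 0.
Proof.
by rewrite /Rprime /=; under eq_forall => k do rewrite mul_diag_mx !mxE.
Qed.

Lemma RsetE i x :
  Rset S c i x <-> forall j, j != i -> gfun S c x i 0 < gfun S c x j 0.
Proof. exact: lte_min_other. Qed.

Hypothesis S_inj : forall i j, row i S = row j S -> i = j.

Lemma Rprime_gfun_lt i x j :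
  Rprime S c i x -> j != i -> gfun S c x i 0 < gfun S c x j 0.
Proof.
move=> /RprimeE x_pos ji; rewrite -subr_gt0 gfun_subE.
have [k Sijk] : exists k, S i k != S j k.
  apply/existsP; apply: contraNT ji; rewrite negb_exists => /forallP eq_ij.
  by apply/eqP/S_inj/rowP => k; rewrite !mxE; apply/esym/eqP/negPn/eq_ij.
rewrite (bigD1 k) //=; apply: ltr_wpDr; last by rewrite pmulrn_lgt0.
by apply: sumr_ge0 => k' _; rewrite mulrn_wge0 ?ltW.
Qed.

Lemma gfun_lt_Rprime i x :
  (forall j, j != i -> gfun S c x i 0 < gfun S c x j 0) -> Rprime S c i x.
Proof.
move=> gi_min; apply/RprimeE => k0.
pose flip k := if k == k0 then - S i k else S i k.
have flip_sign k : is_sign (flip k).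
  by rewrite /flip; case: eqP => _; [apply: is_signN |]; apply: S_sign.
have [j Sj] := sign_rows_cover S_sign S_inj flip_sign.
have Sij k : (S i k != S j k) = (k == k0).
  rewrite Sj /flip; have [->|neq_k] := eqVneq k k0; last by rewrite eqxx.
  by rewrite eq_sym eqNr is_sign_neq0.
have ji : j != i by apply/eqP => eq_ji; move: (Sij k0); rewrite eq_ji !eqxx.
have := gi_min j ji; rewrite -subr_gt0 gfun_subE.
by under eq_bigl => k do rewrite Sij; rewrite big_pred1_eq pmulrn_lgt0.
Qed.

End Regions.

Theorem proposition1 (R : realType) (nx m : nat)
  (c : 'rV[R]_nx -> 'cV[R]_m)
  (hsmooth : forall j : 'I_m, smooth_fun (comp_fun c j))
  (hrank : forall x : 'rV[R]_nx, \rank (grad_mx c x) = m)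
  (S : 'M[R]_(2 ^ m, m))
  (hS_sign : forall (i : 'I_(2 ^ m)) (k : 'I_m), S i k = 1 \/ S i k = -1)
  (hS_distinct : forall i j : 'I_(2 ^ m), row i S = row j S -> i = j) :
  forall i : 'I_(2 ^ m),
    (forall x, Rprime S c i x ->
       forall j : 'I_(2 ^ m), j != i -> gfun S c x i 0 < gfun S c x j 0)
    /\ Rset S c i = Rprime S c i.
Proof.
have lt_g := Rprime_gfun_lt hS_sign hS_distinct.
move=> i; split=> [x x_in j|]; first exact: lt_g.
apply/seteqP; split=> x x_in.
  by move/RsetE: x_in => /(gfun_lt_Rprime hS_sign hS_distinct).
by apply/RsetE => j; apply: lt_g.
Qed.
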